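(* Let $i_{\max}=\max_k i_k$ and, for $0\le i\le i_{\max}$, $m_i=\sum_{k=1}^s\min(i,i_k)$ (so $0=m_0<m_1<\dots<m_{i_{\max}}=n$). For every $j\in\{1,\dots,n\}$, the integer $j-\deg_{\mathfrak n^-}F_j$ is the unique $i\in\{1,\dots,i_{\max}\}$ with $m_{i-1}<j\le m_i$. Equivalently, $\deg_{\mathfrak n^-}F_1=0$ and for $1\le j\le n-1$: $\deg_{\mathfrak n^-}F_{j+1}=\deg_{\mathfrak n^-}F_j$ if $j=m_i$ for some $i\in\{0,\dots,i_{\max}-1\}$, and $\deg_{\mathfrak n^-}F_{j+1}=\deg_{\mathfrak n^-}F_j+1$ otherwise.
   Context: Setup (parabolic contractions of $\mathfrak{gl}_n$). Let $\mathbb C$ be an algebraically closed field of characteristic $0$ and $n\ge 2$. Let $e_{p,q}$ ($1\le p,q\le n$) be the elementary matrices of $\mathfrak{gl}_n$ and $I=\{1,\dots,n\}$. Fix integers $0=\iota_0<\iota_1<\dots<\iota_{s-1}<\iota_s=n$ with $s\ge 2$. Put $I_k=\{\iota_{k-1}+1,\dots,\iota_k\}$, $i_k=|I_k|$ ($1\le k\le s$), and for $x\in I$ let $k(x)$ be the index with $x\in I_k$. Let $\mathfrak p=\operatorname{span}\{e_{p,q}: k(p)\le k(q)\}$ and $\mathfrak n^-=\operatorname{span}\{e_{p,q}: k(p)>k(q)\}$. The parabolic contraction $\mathfrak q=\mathfrak p\ltimes\mathfrak n^-$ is the vector space $\mathfrak{gl}_n$ with the Lie bracket $[p_1,p_2]=p_1p_2-p_2p_1$,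 $[p,x]=\pi_{\mathfrak n^-}(px-xp)$, $[x,y]=0$ for $p,p_1,p_2\in\mathfrak p$, $x,y\in\mathfrak n^-$, where $\pi_{\mathfrak n^-}$ is the projection onto $\mathfrak n^-$ along $\mathfrak p$. $S(\mathfrak q)$ is the polynomial algebra in the $e_{p,q}$. The $\mathfrak n^-$-degree of a monomial in the $e_{p,q}$ is the number of its factors lying in $\mathfrak n^-$; $\deg_{\mathfrak n^-}F$ is the maximum over monomials of $F$. For $J\subset I$, $\Delta_J=\sum_{\sigma\in\mathfrak S(J)}\varepsilon(\sigma)\prod_{l\in J}e_{l,\sigma(l)}$, and $F_j=\sum_{|J|=j}\Delta_J$. *)

From HB Require Import structures.
From mathcomp Require Import all_boot all_order all_algebra all_fingroup.
From mathcomp Require Import mpoly.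
Set Implicit Arguments. Unset Strict Implicit. Unset Printing Implicit Defensive.
Import GRing.Theory.
Local Open Scope ring_scope.

(* Points of I = {1..n} are represented 0-based by p : 'I_n (p stands for p+1).
   The variable e_{p,q} of S(q) is the polynomial variable 'X_(mxvec_index p q)
   of {mpoly R[n*n]}. *)

(* block index k(x) for x in {1..n} (1-based), given the cut points
   iota 0 = 0 < iota 1 < ... < iota s = n :
   k(x) = 1 + #{ k in 1..s-1 | iota k < x } *)
Definition kidx (s : nat) (iota : nat -> nat) (x : nat) : nat :=
  (\sum_(1 <= k < s) (iota k < x : nat) + 1)%N.

Definition kblk (n s : nat) (iota : nat -> nat) (p : 'I_n) : nat :=
  kidx s iota p.+1.

Definition evar (R : ringType) (n : nat) (p q : 'I_n) : {mpoly R[n * n]} :=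
  'X_(mxvec_index p q).

(* Delta_J = sum_{sigma in S(J)} eps(sigma) prod_{l in J} e_{l, sigma l};
   S(J) is realised as the permutations of 'I_n supported in J. *)
Definition Delta (R : ringType) (n : nat) (J : {set 'I_n}) : {mpoly R[n * n]} :=
  \sum_(sigma : 'S_n | perm_on J sigma)
     (-1) ^+ odd_perm sigma * \prod_(l in J) evar R l (sigma l).

Definition Fj (R : ringType) (n j : nat) : {mpoly R[n * n]} :=
  \sum_(J : {set 'I_n} | #|J| == j) Delta R J.

Definition ndeg_mon (n s : nat) (iota : nat -> nat) (m : 'X_{1..n * n}) : nat :=
  (\sum_(p : 'I_n) \sum_(q : 'I_n | kblk s iota q < kblk s iota p)
      m (mxvec_index p q))%N.

(* n^- degree of a polynomial: max over its monomials (0 for the zero polynomial) *)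
Definition ndeg (R : ringType) (n s : nat) (iota : nat -> nat)
    (F : {mpoly R[n * n]}) : nat :=
  (\max_(m <- msupp F) ndeg_mon s iota m)%N.

Definition bsize (iota : nat -> nat) (k : nat) : nat := (iota k - iota k.-1)%N.
Definition imax (s : nat) (iota : nat -> nat) : nat :=
  (\max_(1 <= k < s.+1) bsize iota k)%N.
Definition mi (s : nat) (iota : nat -> nat) (i : nat) : nat :=
  (\sum_(1 <= k < s.+1) minn i (bsize iota k))%N.

From HB Require Import structures.
From mathcomp Require Import all_boot all_order all_algebra all_fingroup.
From mathcomp Require Import mpoly.
From mathcomp Require Import zify.
Set Implicit Arguments. Unset Strict Implicit. Unset Printing Implicit Defensive.
Import GRing.Theory.
Local Open Scope ring_scope.

(* Expanding the determinants, F_j is the sum, over the pairs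
      (J, sigma) with #|J| = j and sigma a permutation supported in J, of
      +-prod_{l in J} e_{l, sigma l}.  Distinct pairs give distinct monomials,
      so nothing cancels, and the n^- degree of F_j is the maximal number of
      "descents" of such a pair: the l in J with k(sigma l) < k(l).
   2. Descents, abstractly.  For any level function kk, a permutation of J
      has at least as many weak ascents as J has points on any single level
      (a counting argument), whence descents <= #|J| - i as soon as one level
      of J has i points.  Conversely, a cyclic rotation of j increasing points
      meeting every level in fewer than i consecutive positions has at least
      j - i descents.
   3. Blocks.  For the parabolic blocks I_1, ..., I_s, a set J with
      m_{i-1} < #|J| has i points in some block (pigeonhole), and the first i
      points of every block form a set of size m_i to which the rotation
      applies. *)

Lemma mxvec_index_eq n (p q p' q' : 'I_n) :
  (mxvec_index p q == mxvec_index p' q') = (p == p') && (q == q').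
Proof.
apply/eqP/andP => [|[/eqP-> /eqP->]//].
by rewrite /mxvec_index => /cast_ord_inj /enum_rank_inj [-> ->].
Qed.

Definition perm_mon n (J : {set 'I_n}) (sigma : 'S_n) : 'X_{1..n * n} :=
  (\sum_(l in J) U_(mxvec_index l (sigma l)))%MM.

Lemma perm_monE n (J : {set 'I_n}) (sigma : 'S_n) p q :
  perm_mon J sigma (mxvec_index p q) = ((p \in J) && (sigma p == q) : nat).
Proof.
rewrite /perm_mon mnm_sumE.
under eq_bigr do rewrite mnm1E mxvec_index_eq.
case: (boolP (p \in J)) => pJ /=.
  rewrite (bigD1 p) //= eqxx /= big1 ?addn0 // => l /andP[_ lp].
  by rewrite (negbTE lp).
by rewrite big1 // => l lJ; case: eqP => [lp|//]; move: pJ; rewrite -lp lJ.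
Qed.

(* A monomial of F_j determines its pair (J, sigma): there is no cancellation. *)
Lemma perm_mon_inj n (J J' : {set 'I_n}) (sigma sigma' : 'S_n) :
  perm_on J sigma -> perm_on J' sigma' -> perm_mon J sigma = perm_mon J' sigma' ->
  J = J' /\ sigma = sigma'.
Proof.
move=> onJ onJ' e.
have agree A A' (t t' : 'S_n) : perm_mon A t = perm_mon A' t' ->
    forall p, p \in A -> p \in A' /\ t' p = t p.
  move=> eAA' p pA; have := perm_monE A t p (t p).
  rewrite pA eqxx eAA' perm_monE.
  by case: (p \in A') => //=; case: eqP.
have eJ : J = J'.
  apply/setP => p; apply/idP/idP => pJ.
    by case: (agree _ _ _ _ e p pJ).
  by case: (agree _ _ _ _ (esym e) p pJ).
split => //; apply/permP => p.
case: (boolP (p \in J)) => pJ; first by case: (agree _ _ _ _ e p pJ).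
by rewrite (out_perm onJ pJ) (out_perm onJ') // -eJ.
Qed.

Lemma prod_evar (R : ringType) n (J : {set 'I_n}) (sigma : 'S_n) :
  \prod_(l in J) evar R l (sigma l) = 'X_[perm_mon J sigma].
Proof. by rewrite (big_morph _ (@mpolyXD _ R) (@mpolyX0 _ R)). Qed.

Lemma mcoeff_Fj (R : ringType) n j m :
  (Fj R n j)@_m = \sum_(J : {set 'I_n} | #|J| == j)
     \sum_(sigma : 'S_n | perm_on J sigma)
        (-1) ^+ odd_perm sigma * (perm_mon J sigma == m)%:R.
Proof.
rewrite /Fj raddf_sum; apply: eq_bigr => J _.
rewrite /Delta raddf_sum; apply: eq_bigr => sigma _.
rewrite !mulr_sign prod_evar.
by case: odd_perm; [rewrite raddfN; apply: (congr1 -%R)|]; exact: mcoeffX.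
Qed.

Lemma msupp_Fj (R : ringType) n j m : m \in msupp (Fj R n j) ->
  exists J : {set 'I_n}, exists sigma : 'S_n,
    [/\ #|J| = j, perm_on J sigma & perm_mon J sigma = m].
Proof.
rewrite mcoeff_msupp mcoeff_Fj.
case: (boolP [exists J : {set 'I_n}, [exists sigma : 'S_n,
   [&& #|J| == j, perm_on J sigma & perm_mon J sigma == m]]]).
  by move=> /existsP[J /existsP[sigma /and3P[/eqP ? ? /eqP ?]]] _; exists J, sigma.
rewrite negb_exists => /forallP none.
rewrite big1 ?eqxx // => J cardJ; rewrite big1 // => sigma onJ.
move: (none J); rewrite negb_exists => /forallP /(_ sigma).
by rewrite cardJ onJ /= => /negbTE ->; rewrite mulr0.
Qed.

Lemma perm_mon_in_Fj (R : ringType) n j (J : {set 'I_n}) (sigma : 'S_n) :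
  #|J| = j -> perm_on J sigma -> perm_mon J sigma \in msupp (Fj R n j).
Proof.
move=> cardJ onJ; rewrite mcoeff_msupp mcoeff_Fj (bigD1 J) ?cardJ //=.
rewrite (bigD1 sigma) //= eqxx mulr1 big1 ?addr0.
  rewrite big1 ?addr0 ?signr_eq0 // => J' /andP[_ neJ].
  rewrite big1 // => sigma' onJ'; case: eqP; rewrite ?mulr0 // => e.
  by case: (perm_mon_inj onJ' onJ e) => eJ; rewrite eJ eqxx in neJ.
move=> sigma' /andP[onJ' ne]; case: eqP; rewrite ?mulr0 // => e.
by case: (perm_mon_inj onJ' onJ e) => _ es; rewrite es eqxx in ne.
Qed.

Local Open Scope nat_scope.

Section Descents.
Variables (T : finType) (kk : T -> nat).

Definition descents (J : {set T}) (sigma : {perm T}) : nat :=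
  #|[set l in J | kk (sigma l) < kk l]|.
Definition ascents (J : {set T}) (sigma : {perm T}) : nat :=
  #|[set l in J | kk l <= kk (sigma l)]|.

Lemma descents_ascents J sigma : descents J sigma + ascents J sigma = #|J|.
Proof.
rewrite /descents /ascents -(cardsID [set l | kk (sigma l) < kk l] J).
congr (_ + _); apply: eq_card => l; first by rewrite !inE.
by rewrite !inE -leqNgt andbC.
Qed.

(* A permutation of J has at least as many weak ascents as J has points on
   the level K: with X (resp. Y) the points of J at level >= K (resp. sent to
   level >= K), #|X| = #|Y|, and the points of level K not in Y are matched by
   the points of Y outside X, which are ascents. *)
Lemma level_le_ascents J sigma K : perm_on J sigma ->
  #|[set l in J | kk l == K]| <= ascents J sigma.
Proof.
move=> onJ; rewrite /ascents.
set B := [set l in J | kk l == K].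
set A := [set l in J | kk l <= kk (sigma l)].
set X := [set l in J | K <= kk l].
set Y := [set l in J | K <= kk (sigma l)].
have cardXY : #|X| = #|Y|.
  have -> : Y = sigma @^-1: X.
    by apply/setP => l; rewrite !inE (perm_closed _ onJ).
  by rewrite card_preimset //; exact: perm_inj.
have c1 := cardsID Y X; have c2 := cardsID X Y; rewrite setIC in c2.
have c3 := cardsID Y B; have c4 := cardsID B A.
have s1 : #|B :\: Y| <= #|X :\: Y|.
  apply: subset_leq_card; apply/subsetP => l; rewrite !inE.
  by case: (l \in J) => //=; case: (K <= kk (sigma l)) => //=; lia.
have s2 : #|B :&: Y| <= #|A :&: B|.
  apply: subset_leq_card; apply/subsetP => l; rewrite !inE.
  by case: (l \in J) => //= /andP[/eqP-> ->]; rewrite eqxx.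
have s3 : #|Y :\: X| <= #|A :\: B|.
  apply: subset_leq_card; apply/subsetP => l; rewrite !inE.
  by case: (l \in J) => //= /andP[? ?]; apply/andP; split; lia.
lia.
Qed.

Lemma descents_le J sigma K i : perm_on J sigma ->
  i <= #|[set l in J | kk l == K]| -> descents J sigma <= #|J| - i.
Proof.
move=> onJ leKi; have := level_le_ascents K onJ.
have := descents_ascents J sigma; lia.
Qed.

End Descents.

Lemma ndeg_perm_mon n s iota (J : {set 'I_n}) (sigma : 'S_n) :
  ndeg_mon s iota (perm_mon J sigma) = descents (kblk s iota) J sigma.
Proof.
rewrite /ndeg_mon /descents -sum1_card [RHS]big_mkcond /=; apply: eq_bigr => p _.
rewrite inE; under eq_bigr do rewrite perm_monE.
case: (boolP (p \in J)) => pJ /=; last by rewrite big1.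
rewrite big_mkcond (bigD1 (sigma p)) //= eqxx big1 ?addn0; first by case: ifP.
by move=> q /negbTE neq; rewrite eq_sym neq; case: ifP.
Qed.

Lemma ndeg_Fj_le (R : ringType) n s iota j c :
  (forall (J : {set 'I_n}) (sigma : 'S_n), #|J| = j -> perm_on J sigma ->
     descents (kblk s iota) J sigma <= c) ->
  ndeg s iota (Fj R n j) <= c.
Proof.
move=> bounded; apply/bigmax_leqP_seq => m /msupp_Fj[J [sigma [cardJ onJ <-]]] _.
by rewrite ndeg_perm_mon; apply: bounded.
Qed.

Lemma ndeg_Fj_ge (R : ringType) n s iota j (J : {set 'I_n}) (sigma : 'S_n) :
  #|J| = j -> perm_on J sigma ->
  descents (kblk s iota) J sigma <= ndeg s iota (Fj R n j).
Proof.
move=> cardJ onJ; rewrite -ndeg_perm_mon.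
exact: (leq_bigmax_seq _ (perm_mon_in_Fj R cardJ onJ)).
Qed.

Lemma sorted_nth_gap (L : seq nat) a d : sorted ltn L -> a + d < size L ->
  nth 0 L a + d <= nth 0 L (a + d).
Proof.
move=> Lsorted; elim: d => [|d IH] lt_ad; first by rewrite !addn0.
rewrite addnS in lt_ad *.
have step : nth 0 L (a + d) < nth 0 L (a + d).+1.
  by apply: (sorted_ltn_nth ltn_trans) => //; rewrite inE //; exact: ltnW.
have := IH (ltnW lt_ad); lia.
Qed.

Lemma enum_set_sorted n (P : {set 'I_n}) : sorted ltn (map val (enum P)).
Proof.
apply: (subseq_sorted ltn_trans (s2 := map val (enum 'I_n))).
  by apply: map_subseq; rewrite enumT; apply: filter_subseq.
by rewrite val_enum_ord iota_ltn_sorted.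
Qed.

Lemma rotation_perm (T : finType) (x0 : T) (L : seq T) (d : nat) : uniq L ->
  exists2 sigma : {perm T}, perm_on [set x in L] sigma &
    forall a, a < size L -> sigma (nth x0 L a) = nth x0 L ((a + d) %% size L).
Proof.
move=> Luniq.
pose f x := if x \in L then nth x0 L ((index x L + d) %% size L) else x.
have fL x : x \in L -> f x \in L.
  move=> xL; rewrite /f xL mem_nth // ltn_mod.
  by move: xL; rewrite -index_mem; case: (size L).
have f_inj : injective f.
  move=> x y; rewrite /f; case: ifP => xL; case: ifP => yL.
  - have L0 : 0 < size L by move: xL; rewrite -index_mem; case: (size L).
    move/eqP; rewrite nth_uniq ?ltn_mod // eqn_modDr.
    rewrite !modn_small ?index_mem // => /eqP e.
    by rewrite -(nth_index x0 xL) -(nth_index x0 yL) e.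
  - by move=> e; have := fL x xL; rewrite /f xL e yL.
  - by move=> e; have := fL y yL; rewrite /f yL -e xL.
  - by [].
exists (perm f_inj).
  by apply/subsetP => x; rewrite !inE permE /f; case: ifP => //; rewrite eqxx.
by move=> a aL; rewrite permE /f mem_nth // index_uniq.
Qed.

(* Lower bound: if kk is nondecreasing and P meets each level in a window of
   fewer than i consecutive points, then rotating the first j points of P by
   j - i produces j - i descents (each of the last j - i points is sent to a
   point at least i places below it, hence to a lower level). *)
Lemma descents_rotation n (kk : 'I_n -> nat) (P : {set 'I_n}) i j :
  {homo kk : x y / x <= y} ->
  (forall x y, x \in P -> y \in P -> kk x = kk y -> y < x + i) ->
  i <= j -> j <= #|P| ->
  exists J : {set 'I_n}, exists sigma : 'S_n,
    [/\ #|J| = j, perm_on J sigma & j - i <= descents kk J sigma].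
Proof.
move=> kk_mono window le_ij le_jP.
have [->|j_gt0] := posnP j.
  exists set0, 1%g; split; rewrite ?cards0 //.
  by apply/subsetP => x; rewrite inE perm1 eqxx.
have /card_gt0P[x0 _] : 0 < #|P| by lia.
set L := take j (enum P).
have sizeL : size L = j by rewrite /L size_takel // -cardE.
have Luniq : uniq L by rewrite /L take_uniq // enum_uniq.
have LP x : x \in L -> x \in P by move/mem_take; rewrite mem_enum.
have gap a d : a + d < j -> nth x0 L a + d <= nth x0 L (a + d).
  move=> lt_ad; rewrite -!(nth_map x0 0 val) ?sizeL //; try lia.
  apply: sorted_nth_gap; last by rewrite size_map sizeL.
  by rewrite /L map_take; apply/take_sorted/enum_set_sorted.
have [sigma onL sigmaE] := rotation_perm x0 (j - i) Luniq.
exists [set x in L], sigma; split => //.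
  by rewrite cardsE -sizeL; apply/card_uniqP.
(* the points in positions i, ..., j - 1 of L are descents *)
pose S := map (nth x0 L) (iota i (j - i)).
have Suniq : uniq S.
  rewrite map_inj_in_uniq ?iota_uniq // => a b; rewrite !mem_iota => ha hb.
  by move/eqP; rewrite nth_uniq ?sizeL //; [move/eqP|lia|lia].
have -> : j - i = #|S| by rewrite (card_uniqP Suniq) size_map size_iota.
apply: subset_leq_card; apply/subsetP => x /mapP[a]; rewrite mem_iota => ha ->.
have aL : nth x0 L a \in L by rewrite mem_nth // sizeL; lia.
rewrite !inE aL /= sigmaE ?sizeL; last by lia.
have -> : (a + (j - i)) %% j = a - i.
  by rewrite (_ : a + (j - i) = a - i + j) ?modnDr ?modn_small; lia.
have below : nth x0 L (a - i) + i <= nth x0 L a.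
  by have := gap (a - i) i; rewrite subnK; [apply; lia | lia].
have le_level := kk_mono _ _ (leq_trans (leq_addr i _) below).
rewrite ltn_neqAle le_level andbT; apply/eqP => same_level.
have := window _ _ (LP _ (mem_nth x0 _)) (LP _ aL) same_level.
by rewrite sizeL => /(_ ltac:(lia)); rewrite ltnNge below.
Qed.

Lemma kblk_mono n s (iota : nat -> nat) : {homo @kblk n s iota : p q / p <= q}.
Proof.
move=> p q le_pq; rewrite /kblk /kidx leq_add2r; apply: leq_sum => k _.
by case: (ltnP (iota k) p.+1) => //= h; rewrite (leq_trans h).
Qed.

Lemma card_interval n a b : #|[set p : 'I_n | a <= p < b]| = minn b n - a.
Proof.
rewrite -sum1_card big_mkcond /=.
under eq_bigr do rewrite inE.
rewrite -(big_mkord xpredT (fun p => if a <= p < b then 1 else 0)).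
elim: n => [|n IH]; first by rewrite big_geq //; lia.
by rewrite big_nat_recr //= IH; case: ifP => /andP; lia.
Qed.

Lemma mi_mono s iota : {homo mi s iota : a b / a <= b}.
Proof. by move=> a b le_ab; apply: leq_sum => K _; lia. Qed.

Lemma level_unique s iota j a b :
  mi s iota a.-1 < j <= mi s iota a -> mi s iota b.-1 < j <= mi s iota b ->
  a = b.
Proof.
have lt_level x y : mi s iota x.-1 < j -> j <= mi s iota y -> x <= y.
  move=> lo hi; rewrite leqNgt; apply/negP => lt_yx.
  have le_yx : y <= x.-1 by lia.
  by have := mi_mono s iota le_yx; lia.
move=> /andP[loa hia] /andP[lob hib]; apply/eqP.
by rewrite eqn_leq (lt_level _ _ loa hib) (lt_level _ _ lob hia).
Qed.

Lemma mi_ge s iota i K : 1 <= K <= s -> minn i (bsize iota K) <= mi s iota i.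
Proof.
by move=> rK; rewrite /mi (bigD1_seq K) ?mem_index_iota ?iota_uniq //=; lia.
Qed.

Lemma big_block_exists s iota i : 1 <= i <= imax s iota ->
  exists2 K, 1 <= K <= s & i <= bsize iota K.
Proof.
move=> /andP[i_gt0 le_i_max].
case: (boolP [exists K : 'I_s.+1, (0 < K) && (i <= bsize iota K)]).
  move=> /existsP[K /andP[K_gt0 bigK]]; exists K => //.
  by rewrite K_gt0 -ltnS ltn_ord.
rewrite negb_exists => /forallP small; have : imax s iota <= i.-1; last by lia.
apply/bigmax_leqP_seq => K; rewrite mem_index_iota => /andP[K_gt0 le_Ks] _.
by have := small (Ordinal le_Ks); rewrite /= K_gt0 /= -ltnNge; lia.
Qed.

Lemma level_le s iota i j : 1 <= i <= imax s iota -> mi s iota i.-1 < j -> i <= j.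
Proof.
move=> ri lo; have [K rK bigK] := big_block_exists ri.
by have := @mi_ge s iota i.-1 K rK; lia.
Qed.

Section Blocks.
Variables (n s : nat) (iota : nat -> nat).
Hypotheses (iota0 : iota 0 = 0) (iotas : iota s = n)
  (iota_incr : forall k, k < s -> iota k < iota k.+1).
Local Notation kb := (@kblk n s iota).

Lemma iota_gap a b : a <= b -> b <= s -> iota a + (b - a) <= iota b.
Proof.
move=> le_ab; elim: b le_ab => [|b IH]; first by rewrite leqn0 => /eqP->; lia.
rewrite leq_eqVlt => /orP[/eqP<- _|lt_ab lt_bs]; first by rewrite subnn addn0.
by have := IH lt_ab (ltnW lt_bs); have := iota_incr lt_bs; lia.
Qed.

Lemma kidx_eq K x : 1 <= K <= s -> iota K.-1 < x <= iota K -> kidx s iota x = K.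
Proof.
move=> /andP[K_gt0 le_Ks] /andP[lo hi].
rewrite /kidx (@big_cat_nat _ _ _ K) /=; try lia.
rewrite (eq_big_nat _ _ (F2 := fun _ => 1)); last first.
  move=> k /andP[k_gt0 lt_kK]; have := @iota_gap k K.-1; lia.
rewrite [X in _ + X + _](eq_big_nat _ _ (F2 := fun _ => 0)); last first.
  move=> k /andP[le_Kk lt_ks]; have := @iota_gap K k le_Kk (ltnW lt_ks).
  by move=> gapKk; apply/eqP; rewrite eqb0 -leqNgt; lia.
by rewrite !sum_nat_const_nat; lia.
Qed.

Lemma kblk_range (p : 'I_n) :
  1 <= kb p <= s /\ iota (kb p).-1 <= p < iota (kb p).
Proof.
have [K lt_pK minK] := ex_minnP (ex_intro (fun k => p < iota k) s
  (ltac:(by rewrite iotas) : p < iota s)).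
have K_gt0 : 0 < K by case: K lt_pK {minK}; rewrite ?iota0.
have le_Ks : K <= s by apply: minK; rewrite iotas.
have lo : iota K.-1 <= p by rewrite leqNgt; apply/negP => /minK; lia.
by rewrite /kblk (@kidx_eq K) ?K_gt0 ?le_Ks //=; lia.
Qed.

Lemma kblk_eqE (p : 'I_n) K : 1 <= K <= s ->
  (kb p == K) = (iota K.-1 <= p < iota K).
Proof.
move=> rK; apply/eqP/idP => [<-|inK]; first by case: (kblk_range p).
by rewrite /kblk (kidx_eq (K := K)); lia.
Qed.

Lemma card_block_lt K c : 1 <= K <= s ->
  #|[set p : 'I_n | (kb p == K) && (p < c)]| = minn (iota K) c - iota K.-1.
Proof.
move=> rK.
have -> : [set p : 'I_n | (kb p == K) && (p < c)] =
          [set p : 'I_n | iota K.-1 <= p < minn (iota K) c].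
  by apply/setP => p; rewrite !inE kblk_eqE //; lia.
by rewrite card_interval; have := @iota_gap K s; lia.
Qed.

Lemma card_by_blocks (J : {set 'I_n}) :
  #|J| = \sum_(1 <= K < s.+1) #|[set l in J | kb l == K]|.
Proof.
have card_sep (P : pred 'I_n) : #|[set l in J | P l]| = \sum_(l in J) (P l : nat).
  rewrite -sum1_card big_mkcond [RHS]big_mkcond /=; apply: eq_bigr => l _.
  by rewrite inE; case: (l \in J); case: (P l).
under [RHS]eq_bigr do rewrite card_sep.
rewrite exchange_big /= -sum1_card; apply: eq_bigr => l _.
have [/andP[? ?] _] := kblk_range l.
rewrite (bigD1_seq (kb l)) ?mem_index_iota ?iota_uniq //=; last by lia.
by rewrite eqxx big1_seq ?addn0 // => K /andP[neK _]; rewrite eq_sym (negbTE neK).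
Qed.

Lemma crowded_block (J : {set 'I_n}) i : mi s iota i.-1 < #|J| ->
  exists K, i <= #|[set l in J | kb l == K]|.
Proof.
move=> crowded.
case: (boolP [exists K : 'I_s.+1, i <= #|[set l in J | kb l == K]|]).
  by move=> /existsP[K bigK]; exists (val K).
rewrite negb_exists => /forallP sparse; suff : #|J| <= mi s iota i.-1 by lia.
rewrite card_by_blocks /mi big_nat_cond [X in _ <= X]big_nat_cond.
apply: leq_sum => K /andP[/andP[K_gt0 le_Ks] _].
have := sparse (Ordinal le_Ks); rewrite /= -ltnNge => lt_i.
have : #|[set l in J | kb l == K]| <= bsize iota K.
  apply: (@leq_trans #|[set p : 'I_n | (kb p == K) && (p < n)]|).
    apply: subset_leq_card; apply/subsetP => l.
    by rewrite !inE ltn_ord andbT => /andP[].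
  by rewrite card_block_lt ?K_gt0 //; rewrite /bsize; lia.
by move=> le_size; rewrite leq_min le_size andbT -ltnS (ltn_predK lt_i).
Qed.

Definition front i : {set 'I_n} := [set p : 'I_n | p < iota (kb p).-1 + i].

Lemma card_front i : #|front i| = mi s iota i.
Proof.
rewrite card_by_blocks /mi; apply: eq_big_nat => K rK.
have -> : [set l in front i | kb l == K] =
          [set p : 'I_n | (kb p == K) && (p < iota K.-1 + i)].
  by apply/setP => p; rewrite !inE; case: eqP => [->|]; rewrite ?andbT ?andbF.
by rewrite card_block_lt //; have := @iota_gap K.-1 K; rewrite /bsize; lia.
Qed.

Lemma front_window i x y : x \in front i -> y \in front i -> kb x = kb y ->
  y < x + i.
Proof.
rewrite !inE => _ fy same_block; have [_ /andP[lo _]] := kblk_range x.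
by move: fy; rewrite -same_block; lia.
Qed.

Lemma mi_imax : mi s iota (imax s iota) = n.
Proof.
rewrite /mi (eq_big_nat _ _ (F2 := fun k => iota k - iota k.-1)); last first.
  move=> K rK; have : bsize iota K <= imax s iota.
    by apply: (leq_bigmax_seq K) => //; rewrite mem_index_iota.
  by rewrite /bsize; lia.
rewrite big_add1 /= telescope_sumn_in ?iotas ?iota0 ?subn0 // => k /andP[_ lt_ks].
exact: ltnW (iota_incr lt_ks).
Qed.

Lemma level_exists j : 1 <= j <= n ->
  exists2 i, 1 <= i <= imax s iota & mi s iota i.-1 < j <= mi s iota i.
Proof.
move=> /andP[j_gt0 le_jn].
have [i hi mini] := ex_minnP (ex_intro (fun i => j <= mi s iota i) (imax s iota)
  (ltac:(by rewrite mi_imax) : j <= mi s iota (imax s iota))).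
have i_gt0 : 0 < i.
  by rewrite lt0n; apply/eqP => i0; move: hi; rewrite i0 /mi big1 //; lia.
exists i; last by rewrite hi andbT ltnNge; apply/negP => /mini; lia.
by rewrite i_gt0 /=; apply: mini; rewrite mi_imax.
Qed.

Lemma ndeg_Fj_level (R : ringType) j i :
  1 <= i <= imax s iota -> mi s iota i.-1 < j <= mi s iota i ->
  ndeg s iota (Fj R n j) = j - i.
Proof.
move=> ri /andP[lo hi]; apply/eqP; rewrite eqn_leq; apply/andP; split.
  apply: ndeg_Fj_le => J sigma cardJ onJ.
  have [K bigK] := @crowded_block J i (ltac:(by rewrite cardJ)).
  by rewrite -cardJ; exact: descents_le onJ bigK.
have [J [sigma [cardJ onJ many]]] := @descents_rotation n kb (front i) i j
  (@kblk_mono n s iota) (@front_window i) (level_le ri lo)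
  (ltac:(by rewrite card_front)).
apply: leq_trans many _; exact: ndeg_Fj_ge.
Qed.

End Blocks.

Local Open Scope ring_scope.
Unset Implicit Arguments.

Theorem mainTheorem2 (R : closedFieldType) (hchar : [pchar R] =i pred0)
    (n s : nat) (iota : nat -> nat)
    (hn : (2 <= n)%N) (hs : (2 <= s)%N)
    (hiota0 : iota 0%N = 0%N) (hiotas : iota s = n)
    (hincr : forall k : nat, (k < s)%N -> (iota k < iota k.+1)%N) :
  forall j : nat, (1 <= j <= n)%N ->
    forall i : nat,
      ((1 <= i <= imax s iota)%N /\
       (mi s iota i.-1 < j <= mi s iota i)%N)
      <-> i = (j - ndeg s iota (Fj R n j))%N.
Proof.
move=> j rj i.
have [i0 ri0 level_i0] := level_exists hiota0 hiotas hincr rj.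
have le_i0j := level_le ri0 (proj1 (andP level_i0)).
rewrite (ndeg_Fj_level hiota0 hiotas hincr R ri0 level_i0) subKn //.
split=> [[_ level_i]|->]; last by [].
exact: level_unique level_i level_i0.
Qed.
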